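(* For every $n\in\mathbb{N}$, \[ \sum_{j=0}^{n}\sum_{i=0}^{j}\frac{\binom{n+1}{i}}{\binom{2n+1}{j}} =\sum_{k=0}^{\lfloor n/2\rfloor}(-1)^k\frac{\binom{n+1}{2k+1}}{\binom{n}{k}} =(n+1)\sum_{k=1}^{n+1}\frac{2^k}{k\binom{n+1+k}{k}} =\frac{n+1}{2^{n+1}}\sum_{k=1}^{n+1}\frac{2^k}{k} =\frac{1}{2^n}\sum_{j=0}^{n}\sum_{i=0}^{j}\frac{\binom{n+1}{i}}{\binom{n}{j}}. \] *)

From HB Require Import structures.
From mathcomp Require Import all_boot all_order all_algebra.
Set Implicit Arguments. Unset Strict Implicit. Unset Printing Implicit Defensive.

From HB Require Import structures.
From mathcomp Require Import all_boot all_order all_algebra.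
From mathcomp Require Import zify ring lra.
Import Order.TTheory GRing.Theory Num.Theory.
Local Open Scope ring_scope.

(* All five expressions, as functions of n, solve x 0 = 1 and
   2 (n+1) x (n+1) = 2 (n+1) + (n+2) x n, the classical recurrence for
   U n = sum_j 1 / C(n, j), so they all equal U n.  The fifth one is U itself, by the
   symmetry P(j) + P(n-j) = 2^(n+1) of the partial row sums of Pascal's triangle; the
   fourth satisfies the recurrence outright; for the third the summand satisfies a
   recurrence in n that telescopes in k; for the first two the recurrence is checked
   with a WZ-style certificate: a closed-form term whose difference in the summation
   index is the recurrence operator applied to the summand. *)

Ltac nonzero_side :=
  repeat (apply/andP; split); rewrite ?expf_neq0 //; try (apply/negP => /eqP ?; lra).

Section BinomialRatios.
Variable R : numFieldType.

Lemma natr_bin_neq0 n j : ('C(n, j)%:R != 0 :> R) = (j <= n)%N.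
Proof. by rewrite pnatr_eq0 -lt0n bin_gt0. Qed.

Lemma natr_bin_down n j : (j <= n)%N ->
  'C(n.+1, j)%:R = n.+1%:R * 'C(n, j)%:R / (n.+1%:R - j%:R) :> R.
Proof.
move=> le_jn; have := mul_bin_down n.+1 j => /= eq_bin.
have nz : n.+1%:R - j%:R != 0 :> R by rewrite subr_eq0 eqr_nat; lia.
apply: (mulIf nz); rewrite mulfVK // -natrB; last by lia.
by rewrite -!natrM; congr (_%:R); lia.
Qed.

Lemma natr_bin_diag n j : 'C(n.+1, j.+1)%:R = n.+1%:R * 'C(n, j)%:R / j.+1%:R :> R.
Proof.
have := mul_bin_diag n.+1 j => /= eq_bin.
by rewrite -natrM eq_bin natrM mulrAC divff ?mul1r // pnatr_eq0.
Qed.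

Lemma natr_bin_left n j : (j <= n)%N ->
  'C(n, j.+1)%:R = 'C(n, j)%:R * (n%:R - j%:R) / j.+1%:R :> R.
Proof.
move=> le_jn; have := mul_bin_left n j => eq_bin.
rewrite -natrB // -natrM [('C(n, j) * _)%N]mulnC -eq_bin natrM
  [_ * 'C(n, j.+1)%:R]mulrC mulfK // pnatr_eq0 //.
Qed.

End BinomialRatios.

Lemma invr_binS (R : realFieldType) n j : (j <= n)%N ->
  ('C(n.+1, j)%:R)^-1 + ('C(n.+1, j.+1)%:R)^-1 = n.+2%:R / (n.+1%:R * 'C(n, j)%:R) :> R.
Proof.
move=> le_jn; rewrite natr_bin_down ?natr_bin_diag //.
have nz_bin : 'C(n, j)%:R != 0 :> R by rewrite natr_bin_neq0.
have : j%:R <= n%:R :> R by rewrite ler_nat.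
have := ler0n R j => *.
by field; nonzero_side.
Qed.

Definition bin_psum (m j : nat) : nat := \sum_(0 <= i < j.+1) 'C(m, i).

Lemma bin_psumS m j : bin_psum m j.+1 = (bin_psum m j + 'C(m, j.+1))%N.
Proof. by rewrite /bin_psum big_nat_recr. Qed.

Lemma bin_psumSn (R : comPzRingType) m j :
  (bin_psum m.+1 j)%:R = 2 * (bin_psum m j)%:R - 'C(m, j)%:R :> R.
Proof.
elim: j => [|j IH]; first by rewrite /bin_psum !big_nat1 !bin0 mulr2n; ring.
by rewrite !bin_psumS binS !natrD IH; ring.
Qed.

Lemma bin_psum_full n : bin_psum n n = (2 ^ n)%N.
Proof.
rewrite /bin_psum big_mkord; have := expnDn 1 1 n; rewrite add1n => ->.
by apply: eq_bigr => i _; rewrite !exp1n !muln1.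
Qed.

Lemma bin_psum_compl n j : (j <= n)%N ->
  (bin_psum n.+1 j + bin_psum n.+1 (n - j))%N = (2 ^ n.+1)%N.
Proof.
move=> le_jn; rewrite -bin_psum_full [RHS]/bin_psum (big_cat_nat _ (n := j.+1)) //=; last by lia.
congr (_ + _)%N; rewrite /bin_psum -{1}(add0n j.+1) big_addn big_nat_rev /=.
have -> : (n.+2 - j.+1 = (n - j).+1)%N by lia.
apply: eq_big_nat => i /andP [_ lt_i].
rewrite -(bin_sub (n := n.+1)); last by lia.
by congr 'C(_, _); lia.
Qed.

Definition rec_sol (x : nat -> rat) : Prop :=
  x 0%N = 1 /\ forall n, 2 * n.+1%:R * x n.+1 = 2 * n.+1%:R + n.+2%:R * x n.

Lemma rec_sol_unique x y : rec_sol x -> rec_sol y -> x =1 y.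
Proof.
move=> [x0 rec_x] [y0 rec_y]; elim=> [|n IH]; first by rewrite x0 y0.
have nz : 2 * n.+1%:R != 0 :> rat by rewrite mulf_neq0 // pnatr_eq0.
by apply: (mulfI nz); rewrite rec_x rec_y IH.
Qed.

Definition inv_bin_sum (n : nat) : rat := \sum_(0 <= j < n.+1) ('C(n, j)%:R)^-1.

Lemma inv_bin_sum_rec : rec_sol inv_bin_sum.
Proof.
split=> [|n]; first by rewrite /inv_bin_sum big_nat1 bin0 invr1.
have sum_pairs : \sum_(0 <= j < n.+1) (('C(n.+1, j)%:R)^-1 + ('C(n.+1, j.+1)%:R)^-1)
    = n.+2%:R / n.+1%:R * inv_bin_sum n.
  rewrite /inv_bin_sum mulr_sumr; apply: eq_big_nat => j /andP [_ lt_jn].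
  by rewrite invr_binS // invfM mulrA.
have dropr : inv_bin_sum n.+1 = \sum_(0 <= j < n.+1) ('C(n.+1, j)%:R)^-1 + 1.
  by rewrite /inv_bin_sum (big_nat_recr n.+1) //= binn invr1.
have dropl : inv_bin_sum n.+1 = 1 + \sum_(0 <= j < n.+1) ('C(n.+1, j.+1)%:R)^-1.
  by rewrite /inv_bin_sum big_nat_recl //= bin0 invr1.
have twice_sum : (inv_bin_sum n.+1 - 1) + (inv_bin_sum n.+1 - 1)
    = n.+2%:R / n.+1%:R * inv_bin_sum n.
  by rewrite -sum_pairs big_split /= {1}dropr dropl; ring.
have nz : n.+1%:R != 0 :> rat by rewrite pnatr_eq0.
have -> : n.+2%:R * inv_bin_sum n = n.+1%:R * (n.+2%:R / n.+1%:R * inv_bin_sum n).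
  by rewrite [n.+2%:R / _]mulrC !mulrA mulfV // mul1r.
by rewrite -twice_sum; ring.
Qed.

Definition S1 (n : nat) : rat := \sum_(0 <= j < n.+1) \sum_(0 <= i < j.+1)
  ('C(n.+1, i)%:R / 'C(2 * n + 1, j)%:R).

Definition S2 (n : nat) : rat := \sum_(0 <= k < (n./2).+1)
  (-1) ^+ k * ('C(n.+1, 2 * k + 1)%:R / 'C(n, k)%:R).

Definition S3 (n : nat) : rat := n.+1%:R * \sum_(1 <= k < n.+2)
  (2 ^+ k / (k%:R * 'C(n.+1 + k, k)%:R)).

Definition S4 (n : nat) : rat := n.+1%:R / 2 ^+ n.+1 * \sum_(1 <= k < n.+2) (2 ^+ k / k%:R).

Definition S5 (n : nat) : rat := 1 / 2 ^+ n * \sum_(0 <= j < n.+1) \sum_(0 <= i < j.+1)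
  ('C(n.+1, i)%:R / 'C(n, j)%:R).

Lemma S5_inv_bin_sum n : S5 n = inv_bin_sum n.
Proof.
rewrite /S5; pose A := \sum_(0 <= j < n.+1) (bin_psum n.+1 j)%:R / 'C(n, j)%:R : rat.
have -> : \sum_(0 <= j < n.+1) \sum_(0 <= i < j.+1) ('C(n.+1, i)%:R / 'C(n, j)%:R : rat) = A.
  by apply: eq_bigr => j _; rewrite -mulr_suml /bin_psum natr_sum.
have twice_A : A + A = 2 ^+ n.+1 * inv_bin_sum n.
  rewrite {2}/A big_nat_rev /= /inv_bin_sum mulr_sumr -big_split /=.
  apply: eq_big_nat => j /andP [_ lt_jn].
  by rewrite add0n subSS bin_sub // -mulrDl -natrD bin_psum_compl // natrX.
have -> : A = 2 ^+ n * inv_bin_sum n.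
  by apply: (mulfI (_ : 2 != 0 :> rat)) => //; rewrite mulrA -exprS -twice_A; ring.
by rewrite mulrA mul1r mulVf ?mul1r // expf_neq0.
Qed.

Lemma S4_rec : rec_sol S4.
Proof.
split=> [|n]; first by rewrite /S4 unlock; vm_compute.
rewrite /S4 (big_nat_recr n.+2) //= !exprS.
have := ler0n rat n => ?.
by field; nonzero_side.
Qed.

Definition S3_term (m k : nat) : rat := 2 ^+ k / (k%:R * 'C(m + k, k)%:R).

Lemma S3_termSn m k : (0 < k)%N -> 2 * S3_term m.+1 k = 2 * S3_term m k - S3_term m k.+1.
Proof.
move=> k_gt0; rewrite /S3_term addSn addnS natr_bin_down ?leq_addl // natr_bin_diag.
have nz_bin : 'C(m + k, k)%:R != 0 :> rat by rewrite natr_bin_neq0 leq_addl.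
have : 1 <= k%:R :> rat by rewrite ler1n.
have := ler0n rat m => ?; rewrite exprS => ?.
by field; nonzero_side.
Qed.

Definition S3_sum (m : nat) : rat := \sum_(1 <= k < m.+1) S3_term m k.

Lemma S3_sumSn m : 2 * S3_sum m.+1 = S3_sum m + 2 / m.+1%:R.
Proof.
rewrite /S3_sum mulr_sumr.
rewrite (eq_big_nat _ _ (F2 := fun k => S3_term m k - (S3_term m k.+1 - S3_term m k))); last first.
  by move=> k /andP [k_gt0 _]; rewrite S3_termSn //; ring.
rewrite sumrB telescope_sumr // (big_nat_recr m.+1) //=.
have first_term : S3_term m 1 = 2 / m.+1%:R by rewrite /S3_term addn1 bin1 mul1r expr1.
have last_terms : S3_term m m.+2 = S3_term m m.+1.
  rewrite /S3_term !addnS natr_bin_diag.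
  have nz_bin : 'C(m + m, m)%:R != 0 :> rat by rewrite natr_bin_neq0 leq_addl.
  have nz_binS : 'C((m + m).+1, m.+1)%:R != 0 :> rat by rewrite natr_bin_neq0; lia.
  have := ler0n rat m => ?.
  by rewrite exprS; field; nonzero_side.
by rewrite first_term last_terms; ring.
Qed.

Lemma S3_rec : rec_sol S3.
Proof.
split=> [|n]; first by rewrite /S3 unlock; vm_compute.
rewrite /S3 -/(S3_sum n.+1) -/(S3_sum n.+2).
have -> : S3_sum n.+2 = (S3_sum n.+1 + 2 / n.+2%:R) / 2 by rewrite -S3_sumSn; field.
have := ler0n rat n => ?.
by field; nonzero_side.
Qed.

Definition S2_term (n k : nat) : rat := (-1) ^+ k * ('C(n.+1, 2 * k + 1)%:R / 'C(n, k)%:R).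

Definition S2_cert (n k : nat) : rat :=
  - 2 * (-1) ^+ k * (1 + k%:R + n%:R + 2 * n%:R * k%:R - 2 * k%:R ^+ 2)
    * 'C(n.+1, 2 * k)%:R / ((2 * k + 1)%:R * 'C(n, k)%:R).

Lemma S2_certS n k : (0 < n)%N -> (2 * k <= n)%N ->
  S2_cert n k.+1 - S2_cert n k = 2 * n.+1%:R * S2_term n.+1 k - n.+2%:R * S2_term n k.
Proof.
move=> n_gt0 le_2k_n; rewrite /S2_cert /S2_term.
have nz_bin : 'C(n, k)%:R != 0 :> rat by rewrite natr_bin_neq0; lia.
(* Rewrite every binomial in terms of C(n, k) and C(n+1, 2k); what remains is an
   identity of rational functions. *)
have E1 : 'C(n.+1, 2 * k + 1)%:R = 'C(n.+1, 2 * k)%:R * (n.+1%:R - (2 * k)%:R) / (2 * k).+1%:R :> rat.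
  by rewrite addn1 natr_bin_left //; lia.
have E2 : 'C(n.+1, 2 * k.+1)%:R
    = 'C(n.+1, 2 * k + 1)%:R * (n.+1%:R - (2 * k + 1)%:R) / (2 * k + 1).+1%:R :> rat.
  have -> : (2 * k.+1 = (2 * k + 1).+1)%N by lia.
  by rewrite natr_bin_left //; lia.
have E3 : 'C(n.+2, 2 * k + 1)%:R = 'C(n.+1, 2 * k + 1)%:R + 'C(n.+1, 2 * k)%:R :> rat.
  by rewrite addn1 binS natrD.
have E4 : 'C(n, k.+1)%:R = 'C(n, k)%:R * (n%:R - k%:R) / k.+1%:R :> rat.
  by rewrite natr_bin_left //; lia.
have E5 : 'C(n.+1, k)%:R = n.+1%:R * 'C(n, k)%:R / (n.+1%:R - k%:R) :> rat.
  by rewrite natr_bin_down //; lia.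
rewrite E2 E3 E4 E5 E1.
have : 2 * k%:R <= n%:R :> rat by rewrite -natrM ler_nat.
have : k%:R + 1 <= n%:R :> rat by rewrite natr1 ler_nat; lia.
move: nz_bin; set c := 'C(n, k)%:R; set b := 'C(n.+1, 2 * k)%:R => nz_bin.
have := ler0n rat k.
clear E1 E2 E3 E4 E5 => *.
rewrite !exprS !(natrD, natrM, mulrS).
by field; rewrite ?nz_bin /=; nonzero_side.
Qed.

Lemma S2_cert0 n : S2_cert n 0 = - 2 * n.+1%:R.
Proof. by rewrite /S2_cert muln0 !bin0 expr0 mulr0 add0n mulrS; field. Qed.

Lemma S2_telescope n K : (0 < n)%N -> (2 * K <= n)%N ->
  2 * n.+1%:R * \sum_(0 <= k < K.+1) S2_term n.+1 k - n.+2%:R * \sum_(0 <= k < K.+1) S2_term n k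
  = S2_cert n K.+1 + 2 * n.+1%:R.
Proof.
move=> n_gt0 le_2K_n; rewrite !mulr_sumr -sumrB (telescope_sumr_eq (S2_cert n)) //.
  by rewrite S2_cert0 mulNr opprK.
by move=> k /andP [_ lt_kK]; rewrite S2_certS //; lia.
Qed.

Lemma S2_cert_odd h :
  S2_cert (2 * h).+1 h.+1 = - (2 * (2 * h).+2%:R * S2_term (2 * h).+2 h.+1).
Proof.
rewrite /S2_cert /S2_term.
have -> : (2 * h.+1 + 1 = (2 * h).+3)%N by lia.
have -> : (2 * h.+1 = (2 * h).+2)%N by lia.
have bin_mid : 'C((2 * h).+1, h.+1)%:R = 'C((2 * h).+1, h)%:R :> rat.
  by rewrite -bin_sub; [congr (_%:R); congr 'C(_, _) | ]; lia.
have nz_bin : 'C((2 * h).+1, h)%:R != 0 :> rat by rewrite natr_bin_neq0; lia.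
rewrite !binn bin_mid natr_bin_diag.
move: nz_bin; set c := 'C((2 * h).+1, h)%:R => nz_bin.
have := ler0n rat h => ?.
rewrite !exprS !mulrS natrM.
by field; nonzero_side.
Qed.

Lemma S2_cert_even h : S2_cert (2 * h) h.+1 = 0.
Proof. by rewrite /S2_cert bin_small ?mulr0 ?mul0r //; lia. Qed.

Lemma S2_rec : rec_sol S2.
Proof.
split=> [|n]; first by rewrite /S2 unlock; vm_compute.
have [->|n_gt0] := posnP n; first by rewrite /S2 unlock; vm_compute.
rewrite -(odd_double_half n) -muln2 mulnC in n_gt0 *.
move: (odd n) (n./2) n_gt0 => [] h h_gt0 /=; rewrite ?add1n ?add0n /S2 in h_gt0 *.
- have := S2_telescope _ h (ltn0Sn _) (leqnSn _).
  rewrite S2_cert_odd.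
  have -> : ((2 * h).+1./2 = h)%N by lia.
  have -> : ((2 * h).+2./2 = h.+1)%N by lia.
  by rewrite (big_nat_recr h.+1) //= -/(S2_term _ _); lra.
- have := S2_telescope _ h h_gt0 (leqnn _).
  rewrite S2_cert_even add0r.
  have -> : ((2 * h)./2 = h)%N by lia.
  have -> : ((2 * h).+1./2 = h)%N by lia.
  lra.
Qed.

Definition S1_term (n j : nat) : rat := (bin_psum n.+1 j)%:R / 'C(2 * n + 1, j)%:R.

Definition S1_cert (n j : nat) : rat :=
  ((- j%:R ^+ 2 + (5 * n%:R + 7) * j%:R - 2 * (n%:R + 1) * (3 * n%:R + 5))
      * (bin_psum n.+1 j)%:R
    + (n%:R + 2) * (2 * n%:R + 2 - j%:R) * 'C(n.+1, j)%:R)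
  / ((2 * n%:R + 3) * 'C(2 * n + 1, j)%:R).

Lemma S1_certS n j : (0 < n)%N -> (j <= n.+1)%N ->
  S1_cert n j.+1 - S1_cert n j = 2 * n.+1%:R * S1_term n.+1 j - n.+2%:R * S1_term n j.
Proof.
move=> n_gt0 le_j_n1; rewrite /S1_cert /S1_term bin_psumS natrD (bin_psumSn _ n.+1).
have nz_bin : 'C(2 * n + 1, j)%:R != 0 :> rat by rewrite natr_bin_neq0; lia.
(* As in [S2_certS], reduce to C(n+1, j) and C(2n+1, j). *)
have E1 : 'C(n.+1, j.+1)%:R = 'C(n.+1, j)%:R * (n.+1%:R - j%:R) / j.+1%:R :> rat.
  by rewrite natr_bin_left.
have E2 : 'C(2 * n + 1, j.+1)%:R
    = 'C(2 * n + 1, j)%:R * ((2 * n + 1)%:R - j%:R) / j.+1%:R :> rat.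
  by rewrite natr_bin_left //; lia.
have E3 : 'C(2 * n.+1 + 1, j)%:R = (2 * n + 1).+2%:R
    * ((2 * n + 1).+1%:R * 'C(2 * n + 1, j)%:R / ((2 * n + 1).+1%:R - j%:R))
    / ((2 * n + 1).+2%:R - j%:R) :> rat.
  have -> : (2 * n.+1 + 1 = (2 * n + 1).+2)%N by lia.
  by rewrite !natr_bin_down //; lia.
rewrite E1 E2 E3.
have : j%:R <= n%:R + 1 :> rat by rewrite natr1 ler_nat.
have : 1 <= n%:R :> rat by rewrite ler1n.
move: nz_bin; set cN := 'C(2 * n + 1, j)%:R; set c := 'C(n.+1, j)%:R.
set p := (bin_psum n.+1 j)%:R => nz_bin.
have := ler0n rat j.
clear E1 E2 E3 => *.
rewrite !(natrD, natrM, mulrS).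
by field; rewrite ?nz_bin /=; nonzero_side.
Qed.

Lemma S1_cert0 n : S1_cert n 0 = - 2 * n.+1%:R.
Proof.
rewrite /S1_cert /bin_psum big_nat1 !bin0 mulrS.
have := ler0n rat n => ?.
by field; nonzero_side.
Qed.

Lemma S1_cert_last n : (0 < n)%N -> S1_cert n n.+2 = - n.+2%:R * S1_term n n.+1.
Proof.
move=> n_gt0; rewrite /S1_cert /S1_term bin_psumS (bin_small (ltnSn _)) addn0 mulr0 addr0.
rewrite (natr_bin_left _ (2 * n + 1) n.+1); last by lia.
have nz_bin : 'C(2 * n + 1, n.+1)%:R != 0 :> rat by rewrite natr_bin_neq0; lia.
move: nz_bin; set c := 'C(2 * n + 1, n.+1)%:R; set p := (bin_psum n.+1 n.+1)%:R => nz_bin.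
have : 1 <= n%:R :> rat by rewrite ler1n.
rewrite !(natrD, natrM, mulrS) => ?.
by field; rewrite ?nz_bin /=; nonzero_side.
Qed.

Lemma S1_rec : rec_sol S1.
Proof.
split=> [|n]; first by rewrite /S1 unlock; vm_compute.
have [->|n_gt0] := posnP n; first by rewrite /S1 unlock; vm_compute.
have S1_sum m : S1 m = \sum_(0 <= j < m.+1) S1_term m j.
  by apply: eq_bigr => j _; rewrite /S1_term -mulr_suml /bin_psum natr_sum.
have : \sum_(0 <= j < n.+2) (2 * n.+1%:R * S1_term n.+1 j - n.+2%:R * S1_term n j)
    = S1_cert n n.+2 - S1_cert n 0.
  by apply: telescope_sumr_eq => // j /andP [_ lt_j]; rewrite S1_certS.
rewrite S1_cert0 S1_cert_last // sumrB -!mulr_sumr -!S1_sum (big_nat_recr n.+1) //=.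
by rewrite -S1_sum; lra.
Qed.

Theorem proposition1 (n : nat) :
  let S1 : rat := \sum_(0 <= j < n.+1) \sum_(0 <= i < j.+1)
                    ('C(n.+1, i)%:R / 'C(2 * n + 1, j)%:R) in
  let S2 : rat := \sum_(0 <= k < (n./2).+1)
                    (-1) ^+ k * ('C(n.+1, 2 * k + 1)%:R / 'C(n, k)%:R) in
  let S3 : rat := (n.+1)%:R * \sum_(1 <= k < n.+2)
                    (2 ^+ k / (k%:R * 'C(n.+1 + k, k)%:R)) in
  let S4 : rat := (n.+1)%:R / 2 ^+ n.+1 * \sum_(1 <= k < n.+2) (2 ^+ k / k%:R) in
  let S5 : rat := 1 / 2 ^+ n * \sum_(0 <= j < n.+1) \sum_(0 <= i < j.+1)
                    ('C(n.+1, i)%:R / 'C(n, j)%:R) in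
  [/\ S1 = S2, S2 = S3, S3 = S4 & S4 = S5].
Proof.
have to_inv_bin_sum x (rec_x : rec_sol x) : x n = inv_bin_sum n :=
  rec_sol_unique _ _ rec_x inv_bin_sum_rec n.
change [/\ S1 n = S2 n, S2 n = S3 n, S3 n = S4 n & S4 n = S5 n].
rewrite (to_inv_bin_sum _ S1_rec) (to_inv_bin_sum _ S2_rec) (to_inv_bin_sum _ S3_rec).
by rewrite (to_inv_bin_sum _ S4_rec) S5_inv_bin_sum.
Qed.
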